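(* Let $m,n\ge 2$ and $\mathcal{A}=(a_{i_1j_1i_2j_2})\in NBQ(m,n)$. Then $$\rho^*=\lambda_{\max}(\mathcal{A})=\rho_M(\mathcal{A}),$$ and the supremum defining $\rho^*$ is attained.
   Context: A biquadratic tensor is $\mathcal{A}=(a_{i_1j_1i_2j_2})\in\mathbb{R}^{m\times n\times m\times n}$ (indices $i_1,i_2\in[m]=\{1,\dots,m\}$, $j_1,j_2\in[n]$); $NBQ(m,n)$ denotes the set of entrywise nonnegative ones. M-eigenvalues: a real number $\lambda$ is an M-eigenvalue of $\mathcal{A}$ if there are $\mathbf{x}\in\mathbb{R}^m$, $\mathbf{y}\in\mathbb{R}^n$ with $\mathbf{x}^\top\mathbf{x}=\mathbf{y}^\top\mathbf{y}=1$, $\mathbf{g}=\lambda\mathbf{x}$ and $\mathbf{h}=\lambda\mathbf{y}$, where $\mathbf{g}\in\mathbb{R}^m,\mathbf{h}\in\mathbb{R}^n$ are given by $g_i=\tfrac12\Big(\sum_{i_1=1}^m\sum_{j_1,j_2=1}^n a_{i_1j_1ij_2}x_{i_1}y_{j_1}y_{j_2}+\sum_{i_2=1}^m\sum_{j_1,j_2=1}^n a_{ij_1i_2j_2}y_{j_1}x_{i_2}y_{j_2}\Big)$, $h_j=\tfrac12\Big(\sum_{i_1,i_2=1}^m\sum_{j_1=1}^n a_{i_1j_1i_2j}x_{i_1}y_{j_1}x_{i_2}+\sum_{i_1,i_2=1}^m\sum_{j_2=1}^n a_{i_1ji_2j_2}x_{i_1}x_{i_2}y_{j_2}\Big)$.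 $\lambda_{\max}(\mathcal{A})$ is the largest M-eigenvalue, equivalently $\max\{\sum a_{i_1j_1i_2j_2}x_{i_1}y_{j_1}x_{i_2}y_{j_2}:\mathbf{x}^\top\mathbf{x}=\mathbf{y}^\top\mathbf{y}=1\}$, and $\rho_M(\mathcal{A})$ is the largest absolute value of an M-eigenvalue of $\mathcal{A}$. Let $S_+^{m-1}=\{\mathbf{x}\in\mathbb{R}^m_+:\sum_i x_i^2=1\}$. For nonzero $\mathbf{x}\in\mathbb{R}^m_+$, $\mathbf{y}\in\mathbb{R}^n_+$, with $\mathbf{g},\mathbf{h}$ defined by the formulas above (as functions of $\mathbf{x},\mathbf{y}$), set $v(\mathbf{x},\mathbf{y})=\min\big\{\{g_i/x_i: x_i>0\}\cup\{h_j/y_j: y_j>0\}\big\}$, and $\rho^*=\sup_{\mathbf{x}\in S_+^{m-1},\,\mathbf{y}\in S_+^{n-1}} v(\mathbf{x},\mathbf{y})$. *)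

From HB Require Import structures.
From mathcomp Require Import all_boot all_order all_algebra.
From mathcomp Require Import all_classical all_reals.
Set Implicit Arguments. Unset Strict Implicit. Unset Printing Implicit Defensive.
Import Order.TTheory GRing.Theory Num.Theory.
Local Open Scope classical_set_scope.
Local Open Scope ring_scope.

Definition biquad (R : realType) (m n : nat) :=
  'I_m -> 'I_n -> 'I_m -> 'I_n -> R.

Section BQ.
Variables (R : realType) (m n : nat).

Definition nonneg_bq (A : biquad R m n) : Prop :=
  forall i1 j1 i2 j2, 0 <= A i1 j1 i2 j2.

Definition gvec (A : biquad R m n) (x : 'I_m -> R) (y : 'I_n -> R) (i : 'I_m) : R :=
  2^-1 * ((\sum_(i1 < m) \sum_(j1 < n) \sum_(j2 < n) A i1 j1 i j2 * x i1 * y j1 * y j2)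
        + (\sum_(i2 < m) \sum_(j1 < n) \sum_(j2 < n) A i j1 i2 j2 * y j1 * x i2 * y j2)).

Definition hvec (A : biquad R m n) (x : 'I_m -> R) (y : 'I_n -> R) (j : 'I_n) : R :=
  2^-1 * ((\sum_(i1 < m) \sum_(i2 < m) \sum_(j1 < n) A i1 j1 i2 j * x i1 * y j1 * x i2)
        + (\sum_(i1 < m) \sum_(i2 < m) \sum_(j2 < n) A i1 j i2 j2 * x i1 * x i2 * y j2)).

Definition is_M_eigenvalue (A : biquad R m n) (lam : R) : Prop :=
  exists (x : 'I_m -> R) (y : 'I_n -> R),
    \sum_(i < m) x i ^+ 2 = 1 /\ \sum_(j < n) y j ^+ 2 = 1 /\
    (forall i, gvec A x y i = lam * x i) /\
    (forall j, hvec A x y j = lam * y j).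

Definition lambda_max (A : biquad R m n) : R := sup (is_M_eigenvalue A).

Definition rho_M (A : biquad R m n) : R :=
  sup [set `|lam| | lam in is_M_eigenvalue A].

Definition Splus (k : nat) (x : 'I_k -> R) : Prop :=
  (forall i, 0 <= x i) /\ \sum_(i < k) x i ^+ 2 = 1.

Definition vfun (A : biquad R m n) (x : 'I_m -> R) (y : 'I_n -> R) : R :=
  inf [set r | (exists i, 0 < x i /\ r = gvec A x y i / x i) \/
               (exists j, 0 < y j /\ r = hvec A x y j / y j)].

Definition rho_star (A : biquad R m n) : R :=
  sup [set r | exists (x : 'I_m -> R) (y : 'I_n -> R),
              Splus x /\ Splus y /\ r = vfun A x y].

End BQ.

From HB Require Import structures.
From mathcomp Require Import all_boot all_order all_algebra.
From mathcomp Require Import all_classical all_reals all_analysis.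
From mathcomp Require Import ring lra.
Set Implicit Arguments. Unset Strict Implicit. Unset Printing Implicit Defensive.
Import Order.TTheory GRing.Theory Num.Theory.
Import numFieldTopology.Exports numFieldNormedType.Exports.
Local Open Scope classical_set_scope.
Local Open Scope ring_scope.

(* With f(x,y) = sum a_{i1 j1 i2 j2} x_i1 y_j1 x_i2 y_j2, the vectors g and h are
   one half of the partial gradients of f, and Euler's identity gives
   x.g(x,y) = y.h(x,y) = f(x,y).  By compactness f attains its maximum lambda on
   the product of the unit spheres, and since the entries of A are nonnegative
   it is attained at a nonnegative pair (|x|,|y|).  First-order optimality along
   the directions x + t e_i, y + t e_j turns such a maximiser into an M-eigenpair
   for lambda, while Euler's identity shows that every M-eigenvalue mu equals
   f(x,y) for its eigenvectors, so |mu| <= f(|x|,|y|) <= lambda.  Finally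
   v(x,y) <= sum_i x_i g_i(x,y) = f(x,y) <= lambda on nonnegative unit pairs,
   with equality at the nonnegative eigenpair. *)

Section Preliminaries.
Variable R : realType.

Definition sqnorm k (x : 'I_k -> R) : R := \sum_(i < k) x i ^+ 2.
Definition basisf k (i : 'I_k) : 'I_k -> R := fun p => (p == i)%:R.
Definition absf k (x : 'I_k -> R) : 'I_k -> R := fun p => `|x p|.

Lemma sum_basisf k (i : 'I_k) (G : 'I_k -> R) :
  \sum_(p < k) basisf i p * G p = G i.
Proof.
rewrite (bigD1 i) //= /basisf eqxx mul1r big1 ?addr0 // => p /negbTE ->.
by rewrite mul0r.
Qed.

Lemma coord_linear k (C : 'I_k -> R) (F : ('I_k -> R) -> R) :
  (forall u, F u = \sum_(i < k) u i * C i) ->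
  forall c u v, F (fun p => c * u p + v p) = c * F u + F v.
Proof.
move=> FE c u v; rewrite !FE mulr_sumr -big_split.
by apply: eq_bigr => i _; rewrite /=; ring.
Qed.

Lemma sqnorm_ge0 k (x : 'I_k -> R) : 0 <= sqnorm x.
Proof. by apply: sumr_ge0 => p _; rewrite sqr_ge0. Qed.

Lemma sqnorm_eq0 k (x : 'I_k -> R) : sqnorm x = 0 -> forall p, x p = 0.
Proof.
move=> x0 p.
have := @psumr_eq0P _ _ predT (fun p => x p ^+ 2) (fun _ _ => sqr_ge0 _) x0 p isT.
by move/eqP; rewrite sqrf_eq0 => /eqP.
Qed.

Lemma sqnormZ k c (x : 'I_k -> R) : sqnorm (fun p => c * x p) = c ^+ 2 * sqnorm x.
Proof. by rewrite /sqnorm mulr_sumr; apply: eq_bigr => p _; rewrite exprMn. Qed.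

Lemma sqnorm_abs k (x : 'I_k -> R) : sqnorm (absf x) = sqnorm x.
Proof. by apply: eq_bigr => p _; rewrite /absf real_normK // num_real. Qed.

Lemma Splus_absf k (x : 'I_k -> R) : sqnorm x = 1 -> Splus (absf x).
Proof. by split; [move=> p; exact: normr_ge0 | exact: etrans (sqnorm_abs x) _]. Qed.

Lemma sqnorm_basisf k (i : 'I_k) : sqnorm (basisf i) = 1.
Proof.
rewrite /sqnorm; under eq_bigr do rewrite expr2.
by rewrite sum_basisf /basisf eqxx.
Qed.

Lemma sqnorm_perturb k (i : 'I_k) t x :
  sqnorm (fun p => t * basisf i p + x p) = sqnorm x + 2 * t * x i + t ^+ 2.
Proof.
rewrite -addrA -(sum_basisf i (fun p => 2 * t * x p + t ^+ 2)) /sqnorm -big_split.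
by apply: eq_bigr => p _; rewrite /basisf /=; case: (p == i); rewrite /=; ring.
Qed.

Lemma sqnorm1_coord_bound k (x : 'I_k -> R) p : sqnorm x = 1 -> -1 <= x p <= 1.
Proof.
move=> x1; have : x p ^+ 2 <= 1.
  rewrite -x1 /sqnorm (bigD1 p) //= lerDl; apply: sumr_ge0 => q _; exact: sqr_ge0.
by move=> xp; apply/andP; split; nra.
Qed.

Lemma sqnorm1_exists_pos k (x : 'I_k -> R) :
  (forall p, 0 <= x p) -> sqnorm x = 1 -> exists p, 0 < x p.
Proof.
move=> x_ge0 x1; apply/not_existsP => x_npos; move: x1.
rewrite /sqnorm big1 => [/eqP|p _]; first by rewrite eq_sym oner_eq0.
have : ~~ (0 < x p) by apply/negP => /x_npos.
by rewrite lt_def negb_and x_ge0 orbF negbK => /eqP ->; rewrite expr0n.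
Qed.

Lemma lin_coef_eq0 (a b : R) : (forall t, a * t + b * t ^+ 2 <= 0) -> a = 0.
Proof.
move=> H; apply/eqP; apply/negPn/negP => a0.
have b1 : 0 < `|b| + 1 by rewrite ltr_wpDl.
have := H (a / (`|b| + 1)).
have -> : a * (a / (`|b| + 1)) + b * (a / (`|b| + 1)) ^+ 2 =
   a ^+ 2 / (`|b| + 1) ^+ 2 * (`|b| + b + 1).
  by field; rewrite gt_eqF.
apply/negP; rewrite -ltNge; apply: mulr_gt0.
  apply: divr_gt0; last by rewrite exprn_gt0.
  by rewrite lt_def sqrf_eq0 a0 sqr_ge0.
have : -b <= `|b| by rewrite ler_normr lexx orbT.
lra.
Qed.

Lemma sup_eq_greatest (E : set R) a : E a -> ubound E a -> sup E = a.
Proof.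
move=> Ea ubEa; apply/le_anti/andP; split; first by apply: ge_sup; [exists a|].
by apply: sup_upper_bound => //; split; [exists a | exists a].
Qed.

End Preliminaries.

Section BiquadraticForm.
Variables (R : realType) (m n : nat) (A : biquad R m n).

Definition bqform (x x' : 'I_m -> R) (y y' : 'I_n -> R) : R :=
  \sum_(i1 < m) \sum_(j1 < n) \sum_(i2 < m) \sum_(j2 < n)
     A i1 j1 i2 j2 * x i1 * y j1 * x' i2 * y' j2.

Definition bqf x y := bqform x x y y.

Lemma bqform_slot1 x' y y' u : bqform u x' y y' = \sum_(i < m) u i *
  \sum_(i2 < m) \sum_(j1 < n) \sum_(j2 < n) A i j1 i2 j2 * y j1 * x' i2 * y' j2.
Proof.
apply: eq_bigr => i _; rewrite exchange_big mulr_sumr; apply: eq_bigr => i2 _.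
rewrite mulr_sumr; apply: eq_bigr => j1 _.
rewrite mulr_sumr; apply: eq_bigr => j2 _; ring.
Qed.

Lemma bqform_slot2 x y y' u : bqform x u y y' = \sum_(i < m) u i *
  \sum_(i1 < m) \sum_(j1 < n) \sum_(j2 < n) A i1 j1 i j2 * x i1 * y j1 * y' j2.
Proof.
under [RHS]eq_bigr do rewrite mulr_sumr.
rewrite [RHS]exchange_big; apply: eq_bigr => i1 _.
under [RHS]eq_bigr do rewrite mulr_sumr.
rewrite [RHS]exchange_big; apply: eq_bigr => j1 _; apply: eq_bigr => i2 _.
rewrite mulr_sumr; apply: eq_bigr => j2 _; ring.
Qed.

Lemma bqform_slot3 x x' y' u : bqform x x' u y' = \sum_(j < n) u j *
  \sum_(i1 < m) \sum_(i2 < m) \sum_(j2 < n) A i1 j i2 j2 * x i1 * x' i2 * y' j2.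
Proof.
under [RHS]eq_bigr do rewrite mulr_sumr.
rewrite [RHS]exchange_big; apply: eq_bigr => i1 _; apply: eq_bigr => j1 _.
rewrite mulr_sumr; apply: eq_bigr => i2 _.
rewrite mulr_sumr; apply: eq_bigr => j2 _; ring.
Qed.

Lemma bqform_slot4 x x' y u : bqform x x' y u = \sum_(j < n) u j *
  \sum_(i1 < m) \sum_(i2 < m) \sum_(j1 < n) A i1 j1 i2 j * x i1 * y j1 * x' i2.
Proof.
under [RHS]eq_bigr do rewrite mulr_sumr.
rewrite [RHS]exchange_big; apply: eq_bigr => i1 _.
under [RHS]eq_bigr do rewrite mulr_sumr.
rewrite [RHS]exchange_big [LHS]exchange_big; apply: eq_bigr => i2 _.
under [RHS]eq_bigr do rewrite mulr_sumr.
rewrite [RHS]exchange_big; apply: eq_bigr => j1 _; apply: eq_bigr => j2 _; ring.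
Qed.

Lemma bqform_lin1 x' y y' c u v :
  bqform (fun p => c * u p + v p) x' y y' = c * bqform u x' y y' + bqform v x' y y'.
Proof. exact: (coord_linear (bqform_slot1 x' y y')). Qed.

Lemma bqform_lin2 x y y' c u v :
  bqform x (fun p => c * u p + v p) y y' = c * bqform x u y y' + bqform x v y y'.
Proof. exact: (coord_linear (bqform_slot2 x y y')). Qed.

Lemma bqform_lin3 x x' y' c u v :
  bqform x x' (fun p => c * u p + v p) y' = c * bqform x x' u y' + bqform x x' v y'.
Proof. exact: (coord_linear (bqform_slot3 x x' y')). Qed.

Lemma bqform_lin4 x x' y c u v :
  bqform x x' y (fun p => c * u p + v p) = c * bqform x x' y u + bqform x x' y v.
Proof. exact: (coord_linear (bqform_slot4 x x' y)). Qed.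

Lemma gvec_bqform x y i :
  gvec A x y i = 2^-1 * (bqform x (basisf R i) y y + bqform (basisf R i) x y y).
Proof. by rewrite bqform_slot2 bqform_slot1 !sum_basisf. Qed.

Lemma hvec_bqform x y j :
  hvec A x y j = 2^-1 * (bqform x x y (basisf R j) + bqform x x (basisf R j) y).
Proof. by rewrite bqform_slot4 bqform_slot3 !sum_basisf. Qed.

Lemma sum_gvec x y : \sum_(i < m) x i * gvec A x y i = bqf x y.
Proof.
transitivity (2^-1 * (bqf x y + bqf x y)); last by field.
rewrite /bqf {1}bqform_slot2 bqform_slot1 -big_split mulr_sumr.
by apply: eq_bigr => i _; rewrite /gvec /=; ring.
Qed.

Lemma bqf_perturb1 t i x y : bqf (fun p => t * basisf R i p + x p) y =
  bqf x y + 2 * t * gvec A x y i + t ^+ 2 * bqf (basisf R i) y.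
Proof. by rewrite /bqf bqform_lin1 !bqform_lin2 gvec_bqform; field. Qed.

Lemma bqf_perturb2 t j x y : bqf x (fun q => t * basisf R j q + y q) =
  bqf x y + 2 * t * hvec A x y j + t ^+ 2 * bqf x (basisf R j).
Proof. by rewrite /bqf bqform_lin3 !bqform_lin4 hvec_bqform; field. Qed.

Lemma bqf_max_gvec lam x y :
  (forall x' y', bqf x' y' <= lam * sqnorm x' * sqnorm y') ->
  sqnorm x = 1 -> sqnorm y = 1 -> bqf x y = lam ->
  forall i, gvec A x y i = lam * x i.
Proof.
move=> le_lam x1 y1 xy_lam i; apply/eqP; rewrite -subr_eq0; apply/eqP.
apply: (@lin_coef_eq0 _ _ (2^-1 * (bqf (basisf R i) y - lam))) => t.
have := le_lam (fun p => t * basisf R i p + x p) y.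
rewrite bqf_perturb1 sqnorm_perturb x1 y1 xy_lam; lra.
Qed.

Lemma bqf_max_hvec lam x y :
  (forall x' y', bqf x' y' <= lam * sqnorm x' * sqnorm y') ->
  sqnorm x = 1 -> sqnorm y = 1 -> bqf x y = lam ->
  forall j, hvec A x y j = lam * y j.
Proof.
move=> le_lam x1 y1 xy_lam j; apply/eqP; rewrite -subr_eq0; apply/eqP.
apply: (@lin_coef_eq0 _ _ (2^-1 * (bqf x (basisf R j) - lam))) => t.
have := le_lam x (fun q => t * basisf R j q + y q).
rewrite bqf_perturb2 sqnorm_perturb x1 y1 xy_lam; lra.
Qed.

Lemma bqfZ c d x y :
  bqf (fun p => c * x p) (fun q => d * y q) = c ^+ 2 * d ^+ 2 * bqf x y.
Proof.
rewrite /bqf /bqform mulr_sumr; apply: eq_bigr => i1 _.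
rewrite mulr_sumr; apply: eq_bigr => j1 _.
rewrite mulr_sumr; apply: eq_bigr => i2 _.
rewrite mulr_sumr; apply: eq_bigr => j2 _; ring.
Qed.

Lemma bqf_le_sqnorm lam :
  (forall x y, sqnorm x = 1 -> sqnorm y = 1 -> bqf x y <= lam) ->
  forall x y, bqf x y <= lam * sqnorm x * sqnorm y.
Proof.
move=> le_lam x y.
have [x0|x_neq0] := eqVneq (sqnorm x) 0.
  rewrite x0 mulr0 mul0r /bqf bqform_slot1 big1 // => p _.
  by rewrite sqnorm_eq0 // mul0r.
have [y0|y_neq0] := eqVneq (sqnorm y) 0.
  rewrite y0 mulr0 /bqf bqform_slot3 big1 // => q _.
  by rewrite sqnorm_eq0 // mul0r.
set a := Num.sqrt (sqnorm x); set b := Num.sqrt (sqnorm y).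
have a2 : a ^+ 2 = sqnorm x by rewrite sqr_sqrtr ?sqnorm_ge0.
have b2 : b ^+ 2 = sqnorm y by rewrite sqr_sqrtr ?sqnorm_ge0.
have a_neq0 : a != 0 by rewrite sqrtr_eq0 -ltNge lt_def x_neq0 sqnorm_ge0.
have b_neq0 : b != 0 by rewrite sqrtr_eq0 -ltNge lt_def y_neq0 sqnorm_ge0.
have unit_x : sqnorm (fun p => a^-1 * x p) = 1 by rewrite sqnormZ exprVn a2 mulVf.
have unit_y : sqnorm (fun q => b^-1 * y q) = 1 by rewrite sqnormZ exprVn b2 mulVf.
have := le_lam _ _ unit_x unit_y; rewrite bqfZ !exprVn => le_scaled.
rewrite -a2 -b2 -mulrA mulrC.
have -> : bqf x y = a ^+ 2 * b ^+ 2 * ((a ^+ 2)^-1 * (b ^+ 2)^-1 * bqf x y).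
  by field; rewrite a_neq0 b_neq0.
by apply: ler_wpM2l; [rewrite mulr_ge0 ?sqr_ge0 | exact: le_scaled].
Qed.

Lemma bqf_abs_le x y : nonneg_bq A -> `|bqf x y| <= bqf (absf x) (absf y).
Proof.
move=> A_ge0; rewrite /bqf /bqform.
apply: le_trans (ler_norm_sum _ _ _) _; apply: ler_sum => i1 _.
apply: le_trans (ler_norm_sum _ _ _) _; apply: ler_sum => j1 _.
apply: le_trans (ler_norm_sum _ _ _) _; apply: ler_sum => i2 _.
apply: le_trans (ler_norm_sum _ _ _) _; apply: ler_sum => j2 _.
by rewrite /absf !normrM (ger0_norm (A_ge0 _ _ _ _)).
Qed.

Lemma M_eigenvalue_bqf lam x y :
  sqnorm x = 1 -> (forall i, gvec A x y i = lam * x i) -> lam = bqf x y.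
Proof.
move=> x1 gE; rewrite -sum_gvec -[lam]mulr1 -x1 mulr_sumr.
by apply: eq_bigr => i _; rewrite gE; ring.
Qed.

Lemma gvec_ge0 x y i : nonneg_bq A ->
  (forall p, 0 <= x p) -> (forall q, 0 <= y q) -> 0 <= gvec A x y i.
Proof.
move=> A_ge0 x_ge0 y_ge0; apply: mulr_ge0; first by rewrite invr_ge0.
by apply: addr_ge0; do 3 (apply: sumr_ge0 => ? _); rewrite !mulr_ge0.
Qed.

Lemma hvec_ge0 x y j : nonneg_bq A ->
  (forall p, 0 <= x p) -> (forall q, 0 <= y q) -> 0 <= hvec A x y j.
Proof.
move=> A_ge0 x_ge0 y_ge0; apply: mulr_ge0; first by rewrite invr_ge0.
by apply: addr_ge0; do 3 (apply: sumr_ge0 => ? _); rewrite !mulr_ge0.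
Qed.

Lemma vfun_le_bqf x y : nonneg_bq A -> Splus x -> Splus y -> vfun A x y <= bqf x y.
Proof.
move=> A_ge0 [x_ge0 x1] [y_ge0 y1].
have inf_lb : lbound [set r | (exists i, 0 < x i /\ r = gvec A x y i / x i) \/
                              (exists j, 0 < y j /\ r = hvec A x y j / y j)] (vfun A x y).
  apply: ge_inf; exists 0 => r [[i [xi_gt0 ->]] | [j [yj_gt0 ->]]].
    by rewrite divr_ge0 ?gvec_ge0 ?ltW.
  by rewrite divr_ge0 ?hvec_ge0 ?ltW.
rewrite -sum_gvec -[vfun _ _ _]mulr1 -x1 mulr_sumr; apply: ler_sum => i _.
have [xi0|xi_neq0] := eqVneq (x i) 0; first by rewrite xi0 expr0n mulr0 mul0r.
have xi_gt0 : 0 < x i by rewrite lt_def xi_neq0 x_ge0.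
have -> : x i * gvec A x y i = gvec A x y i / x i * x i ^+ 2 by field.
by rewrite ler_wpM2r ?sqr_ge0 // inf_lb //; left; exists i.
Qed.

Lemma vfun_M_eigenpair lam x y : Splus x ->
  (forall i, gvec A x y i = lam * x i) -> (forall j, hvec A x y j = lam * y j) ->
  vfun A x y = lam.
Proof.
move=> [x_ge0 x1] gE hE; have [i xi_gt0] := sqnorm1_exists_pos x_ge0 x1.
rewrite /vfun -[RHS]inf1; congr inf; apply/seteqP; split => r /=.
  by case=> -[p [p_gt0 ->]]; rewrite (gE, hE) mulfK // gt_eqF.
by move=> ->; left; exists i; rewrite gE mulfK // gt_eqF.
Qed.

End BiquadraticForm.

Section Maximizer.
Variable R : realType.

Lemma continuous_sum (T : topologicalType) k (G : 'I_k -> T -> R) :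
  (forall i, continuous (G i)) -> continuous (fun v => \sum_(i < k) G i v).
Proof.
move=> G_cont; elim: (index_enum _) => [|i s IHs].
  by under eq_fun do rewrite big_nil; exact: cst_continuous.
under eq_fun do rewrite big_cons.
by move=> v; apply: continuousD; [exact: G_cont | exact: IHs].
Qed.

Lemma continuous_mul (T : topologicalType) (f g : T -> R) :
  continuous f -> continuous g -> continuous (fun v => f v * g v).
Proof. by move=> f_cont g_cont v; exact: (continuousM (f_cont v) (g_cont v)). Qed.

Variables (m n : nat) (A : biquad R m n).

Definition xpart (v : 'rV[R]_(m + n)) : 'I_m -> R := fun i => v ord0 (lshift n i).
Definition ypart (v : 'rV[R]_(m + n)) : 'I_n -> R := fun j => v ord0 (rshift m j).

Lemma xpart_row_mx x y : xpart (row_mx (\row_i x i) (\row_j y j)) = x.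
Proof. by apply/funext => i; rewrite /xpart row_mxEl mxE. Qed.

Lemma ypart_row_mx x y : ypart (row_mx (\row_i x i) (\row_j y j)) = y.
Proof. by apply/funext => j; rewrite /ypart row_mxEr mxE. Qed.

Lemma continuous_sqnorm_xpart : continuous (fun v => sqnorm (xpart v)).
Proof.
apply: continuous_sum => i; under eq_fun do rewrite expr2.
by apply: continuous_mul; exact: coord_continuous.
Qed.

Lemma continuous_sqnorm_ypart : continuous (fun v => sqnorm (ypart v)).
Proof.
apply: continuous_sum => j; under eq_fun do rewrite expr2.
by apply: continuous_mul; exact: coord_continuous.
Qed.

Lemma continuous_bqf : continuous (fun v => bqf A (xpart v) (ypart v)).
Proof.
do 4 (apply: continuous_sum => ?).
by repeat apply: continuous_mul; exact: cst_continuous || exact: coord_continuous.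
Qed.

Definition spheres := [set v : 'rV[R]_(m + n) |
  sqnorm (xpart v) = 1 /\ sqnorm (ypart v) = 1].

Lemma compact_spheres : compact spheres.
Proof.
have spheres_closed : closed spheres.
  have -> : spheres = (fun v => sqnorm (xpart v)) @^-1` [set 1] `&`
                      (fun v => sqnorm (ypart v)) @^-1` [set 1] by [].
  apply: closedI; apply: preimage_closed; rewrite ?closed_eq //.
    by move=> v _; exact: continuous_sqnorm_xpart.
  by move=> v _; exact: continuous_sqnorm_ypart.
have box_compact := @rV_compact R (m + n) (fun _ => `[-1, 1]%classic)
  (fun _ => @segment_compact R (-1) 1).
apply: (subclosed_compact spheres_closed box_compact).
move=> v [x1 y1] k /=; rewrite -(splitK k) in_itv /=.
by case: (fintype.split k) => p;
  [exact: sqnorm1_coord_bound x1 | exact: sqnorm1_coord_bound y1].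
Qed.

Lemma bqf_max_exists : (0 < m)%N -> (0 < n)%N -> exists x0 y0,
  sqnorm x0 = 1 /\ sqnorm y0 = 1 /\
  forall x y, sqnorm x = 1 -> sqnorm y = 1 -> bqf A x y <= bqf A x0 y0.
Proof.
move=> m_gt0 n_gt0.
have spheres_neq0 : spheres !=set0.
  exists (row_mx (\row_i basisf R (Ordinal m_gt0) i)
                 (\row_j basisf R (Ordinal n_gt0) j)).
  by rewrite /spheres /= xpart_row_mx ypart_row_mx !sqnorm_basisf.
have [v] := EVT_max_rV spheres_neq0 compact_spheres
  (continuous_subspaceT continuous_bqf).
rewrite inE => -[x1 y1] v_max.
exists (xpart v), (ypart v); do 2 split => //; move=> x y x1' y1'.
have := v_max (row_mx (\row_i x i) (\row_j y j)); rewrite xpart_row_mx ypart_row_mx.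
by apply; rewrite inE /spheres /= xpart_row_mx ypart_row_mx.
Qed.

End Maximizer.

Section NonnegativeTensor.
Variables (R : realType) (m n : nat) (A : biquad R m n).
Hypothesis A_ge0 : nonneg_bq A.

Lemma bqf_max_Splus_exists : (0 < m)%N -> (0 < n)%N -> exists x y,
  Splus x /\ Splus y /\
  forall x' y', sqnorm x' = 1 -> sqnorm y' = 1 -> bqf A x' y' <= bqf A x y.
Proof.
move=> m_gt0 n_gt0; have [x [y [x1 [y1 xy_max]]]] := bqf_max_exists A m_gt0 n_gt0.
exists (absf x), (absf y); split; first exact: Splus_absf.
split; first exact: Splus_absf.
move=> x' y' x1' y1'; apply: le_trans (xy_max _ _ x1' y1') _.
exact: le_trans (ler_norm _) (bqf_abs_le _ _ A_ge0).
Qed.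

Lemma M_eigenvalue_abs_le lam mu :
  (forall x y, sqnorm x = 1 -> sqnorm y = 1 -> bqf A x y <= lam) ->
  is_M_eigenvalue A mu -> `|mu| <= lam.
Proof.
move=> le_lam [x [y [x1 [y1 [gE _]]]]]; rewrite (M_eigenvalue_bqf x1 gE).
apply: le_trans (bqf_abs_le _ _ A_ge0) _.
by apply: le_lam; rewrite sqnorm_abs.
Qed.

End NonnegativeTensor.

Theorem theorem5p1 (R : realType) (m n : nat) (A : biquad R m n) :
  (2 <= m)%N -> (2 <= n)%N -> nonneg_bq A ->
  rho_star A = lambda_max A /\ lambda_max A = rho_M A /\
  (exists (x : 'I_m -> R) (y : 'I_n -> R),
      Splus x /\ Splus y /\ vfun A x y = rho_star A).
Proof.
move=> m_ge2 n_ge2 A_ge0.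
have [x [y [Sx [Sy xy_max]]]] :=
  bqf_max_Splus_exists A_ge0 (ltnW m_ge2) (ltnW n_ge2).
set lam := bqf A x y in xy_max.
have le_lam := bqf_le_sqnorm xy_max.
have gE := bqf_max_gvec le_lam Sx.2 Sy.2 erefl.
have hE := bqf_max_hvec le_lam Sx.2 Sy.2 erefl.
have lam_eig : is_M_eigenvalue A lam.
  by case: Sx Sy => _ x1 [_ y1]; exists x, y.
have eig_le mu : is_M_eigenvalue A mu -> `|mu| <= lam :=
  M_eigenvalue_abs_le A_ge0 xy_max.
have lmax : lambda_max A = lam.
  by apply: sup_eq_greatest lam_eig _ => mu /eig_le; apply: le_trans; exact: ler_norm.
have rhoM : rho_M A = lam.
  apply: sup_eq_greatest => [|_ [mu /eig_le le_mu <-] //].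
  by exists lam => //; rewrite ger0_norm // (le_trans _ (eig_le _ lam_eig)).
have rho_s : rho_star A = lam.
  apply: sup_eq_greatest => [|_ [x' [y' [Sx' [Sy' ->]]]]].
    by exists x, y; rewrite (vfun_M_eigenpair Sx gE hE).
  exact: le_trans (vfun_le_bqf A_ge0 Sx' Sy') (xy_max _ _ Sx'.2 Sy'.2).
rewrite rho_s lmax rhoM; do 2 split => //.
by exists x, y; rewrite (vfun_M_eigenpair Sx gE hE).
Qed.
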